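(* Let $I\unlhd \mathcal O_K[x_1,\dots,x_n]$ be an ideal and let $w\in\mathbb R^n$. Then $$\overline{\operatorname{in}_{(-1,w)}(\pi^{-1}I)}\big|_{t=1}=\operatorname{in}_{\nu,w}(I).$$
   Context: Let $K$ be a complete field with a non-trivial discrete valuation $\nu:K\to\mathbb R\cup\{\infty\}$ and a uniformizing parameter $p\in K$, with $\nu$ normalized so that $\nu(p)=1$. Let $\mathcal O_K$ be its ring of integers and $\mathfrak K$ its residue field. Let $R\subseteq\mathcal O_K$ be a dense noetherian subring with $p\in R$. Write $x=(x_1,\dots,x_n)$. The map $\pi:R[[t]][x]\to\mathcal O_K[x]$, $t\mapsto p$, is surjective with kernel $\langle p-t\rangle$. For an ideal $I$, $\pi^{-1}I$ denotes its preimage in $R[[t]][x]$. Initial forms over $K$: for $f=\sum_\alpha c_\alpha x^\alpha\in K[x]$ and $w\in\mathbb R^n$, $\operatorname{in}_{\nu,w}(f)=\sum \overline{c_\alpha p^{-\nu(c_\alpha)}}\,x^\alpha\in\mathfrak K[x]$. The sum runs over those $\alpha$ with $c_\alpha\neq0$ for which $w\cdot\alpha-\nu(c_\alpha)$ is maximal, and the bar denotes reduction to $\mathfrak K$. For a subset $I$, $\operatorname{in}_{\nu,w}(I)$ is the ideal of $\mathfrak K[x]$ generated by all $\operatorname{in}_{\nu,w}(f)$ with $f\in I$. Initial forms over $R[[t]]$: for $f=\sum_{\beta,\alpha}c_{\alpha,\beta}t^\beta x^\alpha\in R[[t]][x]$ and $w\in\mathbb R_{<0}\times\mathbb R^n$,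 $\operatorname{in}_w(f)\in R[t,x]$ is the sum of the terms $c_{\alpha,\beta}t^\beta x^\alpha$ for which $w\cdot(\beta,\alpha)$ is maximal. For an ideal $J$, $\operatorname{in}_w(J)\unlhd R[t,x]$ is generated by all $\operatorname{in}_w(f)$ with $f\in J$. For $J\unlhd R[t,x]$, $\overline{J}|_{t=1}$ denotes the image of $J$ under the map $R[t,x]\to\mathfrak K[x]$. This map reduces coefficients modulo the maximal ideal of $\mathcal O_K$ and substitutes $t=1$. *)

From HB Require Import structures.
From mathcomp Require Import all_boot all_order all_algebra.
From mathcomp Require Import reals.
From mathcomp Require Import mpoly.
Set Implicit Arguments. Unset Strict Implicit. Unset Printing Implicit Defensive.
Import Order.TTheory GRing.Theory Num.Theory.
Local Open Scope ring_scope.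

Definition is_ideal (A : comNzRingType) (P : A -> Prop) : Prop :=
  [/\ P 0, (forall x y, P x -> P y -> P (x + y)) &
      (forall a x, P x -> P (a * x))].

Definition gen_ideal (A : comNzRingType) (S : A -> Prop) (x : A) : Prop :=
  exists (k : nat) (a s : 'I_k -> A),
    (forall i, S (s i)) /\ x = \sum_(i < k) a i * s i.

Definition noetherian (A : comNzRingType) : Prop :=
  forall P : A -> Prop, is_ideal P ->
    exists (k : nat) (s : 'I_k -> A),
      forall x, P x <-> gen_ideal (fun y => exists i, y = s i) x.

(* Discrete valuation nu : K -> Z (the value at 0, i.e. +oo, is never  *)
(* used: every statement about nu x is guarded by x != 0).             *)

Section Valued.
Variables (K : fieldType) (nu : K -> int).

Definition is_discrete_valuation : Prop :=
  (forall x y, x != 0 -> y != 0 -> nu (x * y) = nu x + nu y) /\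
  (forall x y, x != 0 -> y != 0 -> x + y != 0 ->
      Num.min (nu x) (nu y) <= nu (x + y)).

Definition inO (x : K) : Prop := x = 0 \/ 0 <= nu x.

Definition close (M : int) (x y : K) : Prop := x = y \/ M <= nu (x - y).

Definition cauchy (u : nat -> K) : Prop :=
  forall M : int, exists N, forall a b, (N <= a)%N -> (N <= b)%N -> close M (u a) (u b).

Definition converges_to (u : nat -> K) (L : K) : Prop :=
  forall M : int, exists N, forall a, (N <= a)%N -> close M (u a) L.

Definition complete_val : Prop :=
  forall u, cauchy u -> exists L, converges_to u L.

(* kk is the residue field of O_K, with reduction map red : O_K -> kk *)
Definition is_residue_map (kk : fieldType) (red : K -> kk) : Prop :=
  [/\ (forall x y, inO x -> inO y -> red (x + y) = red x + red y),
      (forall x y, inO x -> inO y -> red (x * y) = red x * red y),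
      red 1 = 1,
      (forall x, inO x -> (red x = 0 <-> (x = 0 \/ 0 < nu x))) &
      (forall z : kk, exists x, inO x /\ red x = z)].

Definition dense_in_O (R : comNzRingType) (iota : R -> K) : Prop :=
  forall x, inO x -> forall M : int, exists r, close M x (iota r).

(* ideal of O_K[x] : a subset of K[x] consisting of polynomials with   *)
(* coefficients in O_K, which is an ideal of the ring O_K[x]           *)
Definition coeffs_in_O (n : nat) (f : {mpoly K[n]}) : Prop :=
  forall m, inO f@_m.

Definition is_OK_ideal (n : nat) (I : {mpoly K[n]} -> Prop) : Prop :=
  [/\ (forall f, I f -> coeffs_in_O f), I 0,
      (forall f g, I f -> I g -> I (f + g)) &
      (forall a f, coeffs_in_O a -> I f -> I (a * f))].
End Valued.

(* R[[t]][x]: families (c_{alpha,beta}) of elements of R indexed by    *)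
(* beta : nat (power of t) and alpha : 'X_{1..n} (monomial in x) with  *)
(* only finitely many alpha occurring.                                 *)

Definition pstx (R : comNzRingType) (n : nat) := nat -> 'X_{1..n} -> R.

Definition pstx_poly_in_x (R : comNzRingType) n (f : pstx R n) : Prop :=
  exists s : seq 'X_{1..n}, forall b a, f b a != 0 -> a \in s.

(* pi : R[[t]][x] -> O_K[x], t |-> p : coefficientwise the convergent  *)
(* series sum_beta c_{alpha,beta} p^beta                                *)
Definition is_pi (K : fieldType) (nu : K -> int) (R : comNzRingType) (iota : R -> K)
   (p : K) n (f : pstx R n) (g : {mpoly K[n]}) : Prop :=
  pstx_poly_in_x f /\
  forall a, converges_to nu (fun N => \sum_(b < N) iota (f b a) * p ^+ b) g@_a.

Definition pi_preimage (K : fieldType) (nu : K -> int) (R : comNzRingType) (iota : R -> K)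
   (p : K) n (I : {mpoly K[n]} -> Prop) (f : pstx R n) : Prop :=
  pstx_poly_in_x f /\ exists g, I g /\ is_pi nu iota p f g.

(* R[t,x] is {mpoly R[n.+1]}: variable 0 is t, variable i.+1 is x_i.   *)

Definition mtail n (m : 'X_{1..n.+1}) : 'X_{1..n} := [multinom m (lift ord0 i) | i < n].

Definition dotw (F : realType) n (w : 'I_n -> F) (a : 'X_{1..n}) : F :=
  \sum_(i < n) w i * (a i)%:R.

Definition wt (F : realType) n (w0 : F) (w : 'I_n -> F) (b : nat) (a : 'X_{1..n}) : F :=
  w0 * b%:R + dotw w a.

Definition is_init_form (F : realType) (R : comNzRingType) n (w0 : F) (w : 'I_n -> F)
   (f : pstx R n) (g : {mpoly R[n.+1]}) : Prop :=
  forall m : 'X_{1..n.+1},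
    let b := m ord0 in let a := mtail m in
    ((f b a != 0 /\ forall b' a', f b' a' != 0 -> wt w0 w b' a' <= wt w0 w b a) ->
        g@_m = f b a) /\
    (~ (f b a != 0 /\ forall b' a', f b' a' != 0 -> wt w0 w b' a' <= wt w0 w b a) ->
        g@_m = 0).

Definition init_ideal (F : realType) (R : comNzRingType) n (w0 : F) (w : 'I_n -> F)
   (J : pstx R n -> Prop) : {mpoly R[n.+1]} -> Prop :=
  gen_ideal (fun g => exists f, J f /\ is_init_form w0 w f g).

Definition red_t1 (K : fieldType) (kk : fieldType) (red : K -> kk)
   (R : comNzRingType) (iota : R -> K) n (g : {mpoly R[n.+1]}) : {mpoly kk[n]} :=
  \sum_(m <- msupp g) red (iota g@_m) *: 'X_[mtail m].

Definition red_t1_image (K : fieldType) (kk : fieldType) (red : K -> kk)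
   (R : comNzRingType) (iota : R -> K) n (J : {mpoly R[n.+1]} -> Prop)
   (q : {mpoly kk[n]}) : Prop :=
  exists g, J g /\ red_t1 red iota g = q.

Definition init_nu (F : realType) (K : fieldType) (nu : K -> int) (kk : fieldType)
   (red : K -> kk) (p : K) n (w : 'I_n -> F) (f : {mpoly K[n]}) : {mpoly kk[n]} :=
  \sum_(a <- msupp f |
         all (fun a' => dotw w a' - (nu f@_a')%:~R <= dotw w a - (nu f@_a)%:~R) (msupp f))
     red (f@_a * p ^ (- nu f@_a)) *: 'X_[a].

Definition init_nu_ideal (F : realType) (K : fieldType) (nu : K -> int) (kk : fieldType)
   (red : K -> kk) (p : K) n (w : 'I_n -> F) (I : {mpoly K[n]} -> Prop) :
   {mpoly kk[n]} -> Prop :=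
  gen_ideal (fun h => exists f, I f /\ h = init_nu nu red p w f).

(* If f = pi(s), the x^a-part of s starts, in t-degree b say, with the leading
   p-adic digit of the coefficient f_a: f_a = s_(b,a) p^b mod p^(b+1).  So the
   (-1,w)-weight w.a - b of that term bounds w.a - nu(f_a), with equality exactly
   when s_(b,a) has a nonzero residue.  Hence as soon as one term of in_(-1,w)(s)
   survives reduction, the surviving terms are exactly those of in_(nu,w)(f): the
   image of in_(-1,w)(s) is 0 or in_(nu,w)(f).  Conversely, the p-adic digit
   expansion of f in I, with digits in the dense subring R, is a preimage whose
   initial form maps onto in_(nu,w)(f).  As reducing and setting t = 1 is a
   surjective ring morphism R[t,x] -> kk[x], the two generated ideals agree. *)

From HB Require Import structures.
From mathcomp Require Import all_boot all_order all_algebra.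
From mathcomp Require Import reals.
From mathcomp Require Import mpoly.
From mathcomp Require Import zify ring lra.
From Stdlib Require Import Classical.
Import Order.TTheory GRing.Theory Num.Theory.
Set Implicit Arguments. Unset Strict Implicit. Unset Printing Implicit Defensive.
Local Open Scope ring_scope.

Section GeneratedIdeal.
Variables (A : comNzRingType) (S : A -> Prop).

Lemma gen_ideal0 : gen_ideal S 0.
Proof. by exists 0%N, (fun _ => 0), (fun _ => 0); split => [[]//|]; rewrite big_ord0. Qed.

Lemma gen_ideal_gen x : S x -> gen_ideal S x.
Proof.
by move=> Sx; exists 1%N, (fun _ => 1), (fun _ => x); split; rewrite // big_ord1 mul1r.
Qed.

Lemma gen_idealD x y : gen_ideal S x -> gen_ideal S y -> gen_ideal S (x + y).
Proof.
move=> [k1 [a1 [s1 [h1 ->]]]] [k2 [a2 [s2 [h2 ->]]]].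
pose glue T (u : 'I_k1 -> T) (v : 'I_k2 -> T) i :=
  match split i with inl j => u j | inr j => v j end.
exists (k1 + k2)%N, (glue _ a1 a2), (glue _ s1 s2); split.
  by move=> i; rewrite /glue; case: (split i).
by rewrite big_split_ord; congr (_ + _); apply: eq_bigr => i _;
  rewrite /glue ?(unsplitK (inl i)) ?(unsplitK (inr i)).
Qed.

Lemma gen_idealM c x : gen_ideal S x -> gen_ideal S (c * x).
Proof.
move=> [k [a [s [hs ->]]]]; exists k, (fun i => c * a i), s; split => //.
by rewrite mulr_sumr; apply: eq_bigr => i _; rewrite mulrA.
Qed.

Lemma gen_ideal_is_ideal : is_ideal (gen_ideal S).
Proof. by split; [apply: gen_ideal0 | apply: gen_idealD | apply: gen_idealM]. Qed.

Lemma gen_ideal_min (T : A -> Prop) : is_ideal T -> (forall x, S x -> T x) ->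
  forall x, gen_ideal S x -> T x.
Proof.
move=> [T0 TD TM] ST x [k [a [s [hs ->]]]].
elim/big_rec: _ => // i y _ Ty; exact/TD/Ty/TM/ST.
Qed.

End GeneratedIdeal.

Lemma gen_ideal_rmorph (A B : comNzRingType) (h : {rmorphism A -> B})
    (S : A -> Prop) (S' : B -> Prop) :
  (forall x, S x -> h x = 0 \/ S' (h x)) ->
  forall x, gen_ideal S x -> gen_ideal S' (h x).
Proof.
move=> hS; apply: gen_ideal_min.
  split=> [|x y hx hy|c x hx]; rewrite ?rmorph0 ?rmorphD ?rmorphM.
  - exact: gen_ideal0.
  - exact: gen_idealD.
  - exact: gen_idealM.
by move=> x /hS [->|/gen_ideal_gen //]; apply: gen_ideal0.
Qed.

Lemma is_ideal_image (A B : comNzRingType) (h : {rmorphism A -> B}) (T : A -> Prop) :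
  (forall y, exists x, h x = y) -> is_ideal T ->
  is_ideal (fun y => exists x, T x /\ h x = y).
Proof.
move=> h_surj [T0 TD TM]; split.
- by exists 0; rewrite rmorph0.
- by move=> _ _ [x [Tx <-]] [y [Ty <-]]; exists (x + y); rewrite rmorphD; split; auto.
- move=> c _ [x [Tx <-]]; have [d <-] := h_surj c.
  by exists (d * x); rewrite rmorphM; split; auto.
Qed.

Lemma big_only1_seq (V : nmodType) (T : eqType) (r : seq T) (P : pred T) (F : T -> V) x0 :
  uniq r -> (forall x, x \in r -> P x -> x != x0 -> F x = 0) ->
  \sum_(x <- r | P x) F x = if (x0 \in r) && P x0 then F x0 else 0.
Proof.
move=> ur h; case: ifP => [/andP [xr Px]|hn].
  rewrite (big_rem x0) //= Px big1_seq ?addr0 // => x /andP [Px' xr'].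
  apply: h => //; first exact: mem_rem xr'.
  by move: xr'; rewrite mem_rem_uniq // inE => /andP [].
rewrite big1_seq // => x /andP [Px xr]; apply: h => //.
by apply: contraFneq hn => <-; rewrite xr Px.
Qed.

Section Multinomials.
Variable n : nat.

(* [mcons b a] is the exponent of t^b x^a in R[t,x], t being variable 0. *)
Definition mcons (b : nat) (a : 'X_{1..n}) : 'X_{1..n.+1} :=
  [multinom (if unlift ord0 i is Some j then a j else b) | i < n.+1].

Lemma mcons0 b a : mcons b a ord0 = b.
Proof. by rewrite /mcons mnmE unlift_none. Qed.

Lemma mtail_mcons b a : mtail (mcons b a) = a.
Proof. by apply/mnmP => j; rewrite /mtail !mnmE liftK. Qed.

Lemma mtailE (m : 'X_{1..n.+1}) j : mtail m j = m (lift ord0 j).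
Proof. by rewrite /mtail mnmE. Qed.

Lemma mconsK (m : 'X_{1..n.+1}) : mcons (m ord0) (mtail m) = m.
Proof.
apply/mnmP => i; rewrite /mcons mnmE.
by case: unliftP => [j ->|->] //; rewrite mtailE.
Qed.

Lemma mcons_eq (m : 'X_{1..n.+1}) b a :
  (mcons b a == m) = (m ord0 == b) && (mtail m == a).
Proof.
apply/eqP/andP => [<-|[/eqP <- /eqP <-]]; last exact: mconsK.
by rewrite mcons0 mtail_mcons.
Qed.

Lemma mcoeff_sum_scaleX (R : nzRingType) (s : seq 'X_{1..n}) (P : pred 'X_{1..n})
    (c : 'X_{1..n} -> R) a : uniq s ->
  (\sum_(m <- s | P m) c m *: 'X_[m])@_a = if (a \in s) && P a then c a else 0.
Proof.
move=> us; rewrite raddf_sum (big_only1_seq (x0 := a) us) /=.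
  by rewrite mcoeffZ mcoeffX eqxx mulr1.
by move=> m _ _ ma; rewrite mcoeffZ mcoeffX (negbTE ma) mulr0.
Qed.

Variables (R S : comNzRingType) (phi : {rmorphism R -> S}).

Definition t1_var (i : 'I_n.+1) : {mpoly S[n]} :=
  if unlift ord0 i is Some j then 'X_j else 1.

Definition subst_t1 : {rmorphism {mpoly R[n.+1]} -> {mpoly S[n]}} :=
  mmap ((@mpolyC n S) \o phi) t1_var.

Lemma mmap1_t1_var (m : 'X_{1..n.+1}) : mmap1 t1_var m = 'X_[mtail m].
Proof.
rewrite /mmap1 big_ord_recl /t1_var unlift_none expr1n mul1r -mmap1_id /mmap1.
by apply: eq_bigr => j _; rewrite liftK mtailE.
Qed.

Lemma subst_t1E g : subst_t1 g = \sum_(m <- msupp g) phi g@_m *: 'X_[mtail m].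
Proof. by apply: eq_bigr => m _; rewrite mmap1_t1_var /= mul_mpolyC. Qed.

Lemma subst_t1ZX c (m : 'X_{1..n.+1}) : subst_t1 (c *: 'X_[m]) = phi c *: 'X_[mtail m].
Proof. by rewrite /subst_t1 /= mmapZ mmapX mmap1_t1_var /= mul_mpolyC. Qed.

Lemma mcoeff_subst_t1 g a :
  (subst_t1 g)@_a = \sum_(m <- msupp g | mtail m == a) phi g@_m.
Proof.
rewrite subst_t1E raddf_sum [RHS]big_mkcond /=; apply: eq_bigr => m _.
by rewrite mcoeffZ mcoeffX; case: eqP; rewrite ?mulr1 ?mulr0.
Qed.

Lemma subst_t1_surj : (forall z, exists r, phi r = z) ->
  forall q, exists g, subst_t1 g = q.
Proof.
move=> phi_surj q; rewrite [q]mpolyE.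
elim: (msupp q) => [|a s [g hg]]; first by exists 0; rewrite rmorph0 big_nil.
have [r hr] := phi_surj q@_a.
by exists (r *: 'X_[mcons 0 a] + g); rewrite rmorphD subst_t1ZX hg big_cons mtail_mcons hr.
Qed.

End Multinomials.

Arguments subst_t1 {n R S} phi.

Section Valuation.
Variables (K : fieldType) (nu : K -> int).
Hypothesis Hnu : is_discrete_valuation nu.

(* [inO nu] is convertible to [val_ge 0]. *)
Definition val_ge (M : int) (x : K) := x = 0 \/ M <= nu x.

Lemma nuM x y : x != 0 -> y != 0 -> nu (x * y) = nu x + nu y.
Proof. by case: Hnu => H _; apply: H. Qed.

Lemma nuD x y : x != 0 -> y != 0 -> x + y != 0 ->
  Num.min (nu x) (nu y) <= nu (x + y).
Proof. by case: Hnu => _ H; apply: H. Qed.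

Lemma nu1 : nu 1 = 0.
Proof.
have := nuM (oner_neq0 K) (oner_neq0 K); rewrite mulr1 => h.
by apply: (addrI (nu 1)); rewrite addr0 -h.
Qed.

Lemma nuV x : x != 0 -> nu x^-1 = - nu x.
Proof.
move=> x0; have xV0 : x^-1 != 0 by rewrite invr_eq0.
have := nuM x0 xV0; rewrite mulfV // nu1 => /eqP.
by rewrite eq_sym addr_eq0 => /eqP ->; rewrite opprK.
Qed.

Lemma nuN x : x != 0 -> nu (- x) = nu x.
Proof.
have N1_0 : (-1 : K) != 0 by rewrite oppr_eq0 oner_eq0.
have nuN1 : nu (-1) = 0.
  have := nuM N1_0 N1_0; rewrite mulrNN mulr1 nu1 => h.
  have : nu (-1) *+ 2 == 0 by rewrite mulr2n -h.
  by rewrite mulrn_eq0 => /eqP.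
by move=> x0; rewrite -mulN1r nuM // nuN1 add0r.
Qed.

Lemma val_ge0 M : val_ge M 0. Proof. by left. Qed.

Lemma val_ge_le M M' x : M' <= M -> val_ge M x -> val_ge M' x.
Proof. by move=> hM [->|h]; [left|right; apply: le_trans h]. Qed.

Lemma val_geD M x y : val_ge M x -> val_ge M y -> val_ge M (x + y).
Proof.
case=> [->|hx]; first by rewrite add0r.
case=> [->|hy]; first by rewrite addr0; right.
have [->|x0] := eqVneq x 0; first by rewrite add0r; right.
have [->|y0] := eqVneq y 0; first by rewrite addr0; right.
have [->|xy0] := eqVneq (x + y) 0; first by left.
by right; apply: le_trans (nuD x0 y0 xy0); rewrite le_min hx hy.
Qed.

Lemma val_geN M x : val_ge M x -> val_ge M (- x).
Proof.
have [->|x0] := eqVneq x 0; first by rewrite oppr0.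
by case=> [x0'|h]; [rewrite x0' eqxx in x0|right; rewrite nuN].
Qed.

Lemma val_geB M x y : val_ge M x -> val_ge M y -> val_ge M (x - y).
Proof. by move=> hx /val_geN; apply: val_geD. Qed.

Lemma val_geM M N x y : val_ge M x -> val_ge N y -> val_ge (M + N) (x * y).
Proof.
have [->|x0] := eqVneq x 0; first by rewrite mul0r; left.
have [->|y0] := eqVneq y 0; first by rewrite mulr0; left.
case=> [x0'|hx]; first by rewrite x0' eqxx in x0.
case=> [y0'|hy]; first by rewrite y0' eqxx in y0.
by right; rewrite nuM // lerD.
Qed.

Lemma val_ge_sum M (I : Type) (r : seq I) (P : pred I) (F : I -> K) :
  (forall i, P i -> val_ge M (F i)) -> val_ge M (\sum_(i <- r | P i) F i).
Proof.
move=> h; elim/big_rec: _ => [|i x Pi hx]; first exact: val_ge0.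
by apply: val_geD => //; apply: h.
Qed.

Lemma closeE M x y : close nu M x y <-> val_ge M (x - y).
Proof.
split; first by case=> [->|h]; [rewrite subrr; left|right].
by case=> [/eqP|h]; [rewrite subr_eq0 => /eqP ->; left|right].
Qed.

Lemma close_sym M x y : close nu M x y -> close nu M y x.
Proof. by move/closeE/val_geN; rewrite opprB => /closeE. Qed.

Lemma close_trans M x y z : close nu M x y -> close nu M y z -> close nu M x z.
Proof.
by move=> /closeE hxy /closeE hyz; apply/closeE; rewrite -(subrKA y); apply: val_geD.
Qed.

Lemma nu_absz x : inO nu x -> x != 0 -> nu x = `|nu x|%N.
Proof. by move=> [->|nux0]; [rewrite eqxx | rewrite gez0_abs]. Qed.

Lemma nuDr_eq x e : x != 0 -> val_ge (nu x + 1) e -> x + e != 0 /\ nu (x + e) = nu x.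
Proof.
move=> x0 [->|he]; first by rewrite addr0.
have [->|e0] := eqVneq e 0; first by rewrite addr0.
have xe0 : x + e != 0.
  apply: contraTneq he => /eqP; rewrite addr_eq0 => /eqP ->.
  rewrite nuN //; lia.
have lt_xe : nu x < nu e by lia.
split => //; apply/eqP; rewrite eq_le.
have := nuD x0 e0 xe0; rewrite (min_idPl (ltW lt_xe)) => ->; rewrite andbT.
have Ne0 : - e != 0 by rewrite oppr_eq0.
have := nuD xe0 Ne0; rewrite addrK nuN // ge_min => /(_ x0) /orP [] //.
by move=> /(lt_le_trans lt_xe); rewrite ltxx.
Qed.

Section Uniformizer.
Variable p : K.
Hypotheses (Hp0 : p != 0) (Hp : nu p = 1).

Lemma nuX k : nu (p ^+ k) = k%:Z.
Proof.
elim: k => [|k IH]; first by rewrite expr0 nu1.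
by rewrite exprS nuM ?expf_neq0 // IH Hp -addn1 PoszD addrC.
Qed.

Lemma val_ge_mulX M k x : val_ge M x -> val_ge (M + k%:Z) (x * p ^+ k).
Proof. by move=> hx; apply: val_geM hx _; right; rewrite nuX. Qed.

Lemma val_ge_divX M k x : val_ge (M + k%:Z) x -> val_ge M (x / p ^+ k).
Proof.
move=> hx; have := val_geM hx (_ : val_ge (- k%:Z) (p ^+ k)^-1); rewrite addrK.
by apply; right; rewrite nuV ?expf_neq0 // nuX.
Qed.

Section Residue.
Variables (kk : fieldType) (red : K -> kk).
Hypothesis Hred : is_residue_map nu red.

Lemma redD x y : inO nu x -> inO nu y -> red (x + y) = red x + red y.
Proof. by case: Hred => hD _ _ _ _; apply: hD. Qed.

Lemma redM x y : inO nu x -> inO nu y -> red (x * y) = red x * red y.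
Proof. by case: Hred => _ hM _ _ _; apply: hM. Qed.

Lemma red1 : red 1 = 1.
Proof. by case: Hred. Qed.

Lemma red_surj z : exists x, inO nu x /\ red x = z.
Proof. by case: Hred => _ _ _ _; apply. Qed.

Lemma red_eq0 x : inO nu x -> red x = 0 <-> val_ge 1 x.
Proof. by case: Hred => _ _ _ h _ /h ->. Qed.

Lemma redB x y : inO nu x -> inO nu y -> red (x - y) = red x - red y.
Proof.
move=> hx hy; apply: (addIr (red y)); rewrite subrK -redD ?subrK //.
exact: val_geB.
Qed.

Lemma red_close x y : inO nu x -> inO nu y -> close nu 1 x y -> red x = red y.
Proof.
move=> hx hy /closeE h; apply/eqP; rewrite -subr_eq0 -redB //.
by apply/eqP/red_eq0 => //; apply: val_geB.
Qed.

Lemma close_lead_unit c b x : inO nu c -> red c != 0 ->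
  close nu b.+1%:Z x (c * p ^+ b) ->
  [/\ x != 0, nu x = b%:Z & red (x * p ^ (- nu x)) = red c].
Proof.
move=> cO redc0 /closeE hx.
have c0 : c != 0 by apply: contraNneq redc0 => ->; apply/eqP/red_eq0; left.
have nuc : nu c = 0.
  case: cO => [c0'|/[dup] nuc_ge0]; first by rewrite c0' eqxx in c0.
  rewrite le0r => /orP [/eqP //|nuc_gt0].
  by case/eqP: redc0; apply/red_eq0 => //; right; lia.
have y0 : c * p ^+ b != 0 by rewrite mulf_neq0 ?expf_neq0.
have nuy : nu (c * p ^+ b) = b%:Z by rewrite nuM ?expf_neq0 // nuc nuX add0r.
have hxy : val_ge (nu (c * p ^+ b) + 1) (x - c * p ^+ b).
  by rewrite nuy; apply: val_ge_le hx; lia.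
have [] := nuDr_eq y0 hxy; rewrite [_ + (x - _)]addrC subrK nuy => x0 nux.
split => //.
have -> : x * p ^ (- nu x) = c + (x - c * p ^+ b) / p ^+ b.
  by rewrite nux -exprnN; field; exact: expf_neq0.
have hs : val_ge 1 ((x - c * p ^+ b) / p ^+ b) by apply/val_ge_divX/(val_ge_le _ hx); lia.
apply: red_close => //; first exact: val_geD cO (val_ge_le _ hs).
by apply/closeE; rewrite addrC addKr.
Qed.

Lemma close_lead_nonunit c b x : inO nu c -> red c = 0 ->
  close nu b.+1%:Z x (c * p ^+ b) -> val_ge b.+1%:Z x.
Proof.
move=> cO /(red_eq0 cO) /(val_ge_mulX b) hc /closeE hx.
rewrite -(subrK (c * p ^+ b) x); apply: val_geD hx (val_ge_le _ hc); lia.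
Qed.

Section Digits.
Variables (R : comNzRingType) (iota : {rmorphism R -> K}).
Hypotheses (HRO : forall r, inO nu (iota r)) (Hdense : dense_in_O nu iota).

Definition red_iota_fun (r : R) := red (iota r).

Fact red_iota_is_zmod_morphism : zmod_morphism red_iota_fun.
Proof. by move=> x y; rewrite /red_iota_fun rmorphB redB. Qed.

Fact red_iota_is_monoid_morphism : monoid_morphism red_iota_fun.
Proof. by split=> [|x y]; rewrite /red_iota_fun ?rmorph1 ?red1 // rmorphM redM. Qed.

HB.instance Definition _ :=
  GRing.isZmodMorphism.Build R kk red_iota_fun red_iota_is_zmod_morphism.
HB.instance Definition _ :=
  GRing.isMonoidMorphism.Build R kk red_iota_fun red_iota_is_monoid_morphism.

Definition red_iota : {rmorphism R -> kk} := red_iota_fun.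

Lemma red_iota_surj z : exists r, red_iota r = z.
Proof.
have [x [xO <-]] := red_surj z; have [r hr] := Hdense xO 1.
by exists r; apply/esym/red_close.
Qed.

Definition val_geb M x := (x == 0) || (M <= nu x).

Lemma val_gebP M x : reflect (val_ge M x) (val_geb M x).
Proof. by apply: (iffP orP) => -[/eqP|]; [left|right|left|right]. Qed.

Lemma exists_digit x : exists r : R, ~~ val_geb 0 x || val_geb 1 (x - iota r).
Proof.
have [/val_gebP xO|] := boolP (val_geb 0 x); last by exists 0.
by have [r /closeE/val_gebP hr] := Hdense xO 1; exists r; rewrite hr orbT.
Qed.

(* The digit of a multiple of [p] is [0], so that leading zero digits are exact. *)
Definition digit x := if val_geb 1 x then 0 else xchoose (exists_digit x).

Lemma digit_close x : inO nu x -> val_ge 1 (x - iota (digit x)).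
Proof.
move=> /val_gebP xO; rewrite /digit; case: ifP => [/val_gebP|_].
  by rewrite rmorph0 subr0.
by have /orP [/negP|/val_gebP //] := xchooseP (exists_digit x).
Qed.

Lemma digit_val_ge1 x : val_ge 1 x -> digit x = 0.
Proof. by move=> /val_gebP h; rewrite /digit h. Qed.

Fixpoint digit_rem x k :=
  if k is k'.+1 then (digit_rem x k' - iota (digit (digit_rem x k'))) / p else x.

Definition pdigit x k := digit (digit_rem x k).

Lemma digit_rem_inO x k : inO nu x -> inO nu (digit_rem x k).
Proof.
move=> xO; elim: k => [//|k IH] /=.
by apply: (@val_ge_divX 0 1); rewrite add0r; apply: digit_close.
Qed.

Lemma pdigit_expansion x k :
  x = \sum_(b < k) iota (pdigit x b) * p ^+ b + digit_rem x k * p ^+ k.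
Proof.
elim: k => [|k IH]; first by rewrite big_ord0 add0r expr0 mulr1.
rewrite {1}IH big_ord_recr /= -addrA; congr (_ + _).
by rewrite /pdigit exprSr; field.
Qed.

Lemma pdigit_converge x : inO nu x ->
  converges_to nu (fun k => \sum_(b < k) iota (pdigit x b) * p ^+ b) x.
Proof.
move=> xO M; exists `|M|%N => k hk; apply/closeE.
rewrite {2}(pdigit_expansion x k) opprD addrA subrr add0r; apply: val_geN.
have := val_ge_mulX k (digit_rem_inO k xO); rewrite add0r; apply: val_ge_le.
by apply: le_trans (lez_abs M) _; rewrite lez_nat.
Qed.

Lemma pdigit0 k : pdigit 0 k = 0.
Proof.
have rem0 j : digit_rem 0 j = 0.
  by elim: j => [//|j /= ->]; rewrite digit_val_ge1 ?rmorph0 ?subr0 ?mul0r //; left.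
by rewrite /pdigit rem0 digit_val_ge1 //; left.
Qed.

Section NonzeroDigits.
Variables (x : K) (k : nat).
Hypotheses (x0 : x != 0) (nux : nu x = k%:Z).

Lemma digit_rem_lead j : (j <= k)%N -> digit_rem x j = x / p ^+ j.
Proof.
elim: j => [|j IH] hj; first by rewrite expr0 divr1.
rewrite /= IH ?(ltnW hj) // digit_val_ge1.
  by rewrite rmorph0 subr0 exprSr; field; apply/andP; split; rewrite ?expf_neq0.
by apply: val_ge_divX; right; rewrite nux; lia.
Qed.

Lemma pdigit_lt j : (j < k)%N -> pdigit x j = 0.
Proof.
move=> hj; rewrite /pdigit digit_rem_lead ?(ltnW hj) // digit_val_ge1 //.
by apply: val_ge_divX; right; rewrite nux; lia.
Qed.

Lemma pdigit_lead : pdigit x k != 0 /\ red_iota (pdigit x k) = red (x * p ^ (- nu x)).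
Proof.
have -> : x * p ^ (- nu x) = digit_rem x k by rewrite digit_rem_lead // nux -exprnN.
rewrite /pdigit; set y := digit_rem x k.
have y0 : y != 0 by rewrite /y digit_rem_lead // mulf_neq0 ?invr_eq0 ?expf_neq0.
have nuy : nu y = 0.
  by rewrite /y digit_rem_lead // nuM ?invr_eq0 ?expf_neq0 // nuV ?expf_neq0 // nuX nux subrr.
have yO : inO nu y by right; rewrite nuy.
have hy := digit_close yO.
split; last by apply/esym/red_close => //; apply/closeE.
apply/eqP => d0; move: hy; rewrite d0 rmorph0 subr0.
by case=> [/eqP|]; rewrite ?(negbTE y0) ?nuy.
Qed.

End NonzeroDigits.

Lemma red_t1E n (g : {mpoly R[n.+1]}) : red_t1 red iota g = subst_t1 red_iota g.
Proof. by rewrite subst_t1E. Qed.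

Section InitialForms.
Variables (F : realType) (n : nat) (w : 'I_n -> F).

Local Notation wt := (@wt F n (-1) w).
Local Notation subst := (subst_t1 red_iota).

Lemma wt_le b b' a : (wt b a <= wt b' a) = (b' <= b)%N.
Proof. by rewrite /wt lerD2r !mulN1r lerN2 ler_nat. Qed.

Definition top_term (s : pstx R n) b a :=
  s b a != 0 /\ forall b' a', s b' a' != 0 -> wt b' a' <= wt b a.

Lemma top_term_min s b a : top_term s b a -> forall b', (b' < b)%N -> s b' a = 0.
Proof.
move=> [_ hmax] b' hb'; apply/eqP; apply: contraLR hb' => /hmax.
by rewrite wt_le -leqNgt.
Qed.

Lemma top_term_uniq s b b' a : top_term s b a -> top_term s b' a -> b = b'.
Proof.
move=> [sb hmax] [sb' hmax']; apply/eqP; rewrite eqn_leq.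
by rewrite -!(wt_le _ _ a) hmax ?hmax'.
Qed.

Definition nu_wt (f : {mpoly K[n]}) a : F := dotw w a - (nu f@_a)%:~R.

Definition nu_top f a := all (fun a' => nu_wt f a' <= nu_wt f a) (msupp f).

Lemma nu_wtE f a b : nu f@_a = b%:Z -> nu_wt f a = wt b a.
Proof. by move=> h; rewrite /nu_wt /wt h mulN1r addrC. Qed.

Lemma mcoeff_init_nu f a : (init_nu nu red p w f)@_a =
  if (a \in msupp f) && nu_top f a then red (f@_a * p ^ (- nu f@_a)) else 0.
Proof. exact: mcoeff_sum_scaleX (msupp_uniq f). Qed.

Section InitForm.
Variables (s : pstx R n) (g : {mpoly R[n.+1]}).
Hypothesis hg : is_init_form (-1) w s g.

Lemma init_form_supp m :
  m \in msupp g -> top_term s (m ord0) (mtail m) /\ g@_m = s (m ord0) (mtail m).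
Proof.
rewrite mcoeff_msupp => gm0; have [g_top g_ntop] := hg m.
have hmax : top_term s (m ord0) (mtail m).
  by apply: NNPP => /g_ntop gm; rewrite gm eqxx in gm0.
by split; last exact: g_top.
Qed.

Lemma mcoeff_subst_top b a : top_term s b a -> (subst g)@_a = red_iota (s b a).
Proof.
move=> hmax; have [g_top _] := hg (mcons b a); rewrite /= mcons0 mtail_mcons in g_top.
have gba : mcons b a \in msupp g by rewrite mcoeff_msupp g_top //; case: hmax.
rewrite mcoeff_subst_t1 (big_only1_seq (x0 := mcons b a)) ?msupp_uniq //.
  by rewrite gba mtail_mcons eqxx g_top.
move=> m gm /eqP ma; have [hmax_m _] := init_form_supp gm; rewrite ma in hmax_m.
by rewrite -(mconsK m) ma -(top_term_uniq hmax hmax_m) eqxx.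
Qed.

Lemma mcoeff_subst_neq0 a : (subst g)@_a != 0 -> exists b, top_term s b a.
Proof.
move=> ne0; apply: NNPP => ntop; move: ne0; rewrite mcoeff_subst_t1 big1_seq ?eqxx //.
move=> m /andP [/eqP ma /init_form_supp [hmax _]].
by case: ntop; exists (m ord0); rewrite -ma.
Qed.

End InitForm.

Section PiPreimage.
Variables (s : pstx R n) (f : {mpoly K[n]}).
Hypotheses (s_pi : is_pi nu iota p s f) (fO : coeffs_in_O nu f).

Lemma pi_coef_close a k : close nu k%:Z f@_a (\sum_(b < k) iota (s b a) * p ^+ b).
Proof.
have [N hN] := s_pi.2 a k%:Z; have := hN (k + N)%N (leq_addl _ _).
rewrite big_split_ord /= => /close_sym /close_trans; apply; apply/closeE.
rewrite addrAC subrr add0r; apply: val_ge_sum => i _.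
have := val_ge_mulX (k + i) (HRO (s (k + i)%N a)); rewrite add0r.
by apply: val_ge_le; rewrite lez_nat leq_addr.
Qed.

Lemma pi_coef_lead a b : (forall b', (b' < b)%N -> s b' a = 0) ->
  close nu b.+1%:Z f@_a (iota (s b a) * p ^+ b).
Proof.
move=> low; have := pi_coef_close a b.+1; rewrite big_ord_recr /= big1 ?add0r //.
by move=> i _; rewrite low // rmorph0 mul0r.
Qed.

Lemma pi_low_term a : f@_a != 0 -> exists b, s b a != 0 /\ nu_wt f a <= wt b a.
Proof.
move=> fa0; pose k := `|nu f@_a|%N.
have [/existsP [b sb0]|] := boolP [exists b : 'I_k.+1, s b a != 0].
  by exists b; rewrite (nu_wtE (nu_absz (fO a) fa0)) wt_le -ltnS.
rewrite negb_exists => /forallP low; have := pi_coef_close a k.+1.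
rewrite big1 => [/closeE|b _]; last first.
  by move: (low b); rewrite negbK => /eqP ->; rewrite rmorph0 mul0r.
rewrite subr0 => -[fa0'|]; first by rewrite fa0' eqxx in fa0.
by rewrite nu_absz // lez_nat ltnn.
Qed.

Lemma nu_wt_le_top a b a' : a \in msupp f -> top_term s b a' -> nu_wt f a <= wt b a'.
Proof.
rewrite mcoeff_msupp => /pi_low_term [b0 [sb0 le_wt]] [_ hmax].
exact: le_trans le_wt (hmax _ _ sb0).
Qed.

Lemma top_term_unit b a : top_term s b a -> red_iota (s b a) != 0 ->
  [/\ a \in msupp f, nu_wt f a = wt b a & red (f@_a * p ^ (- nu f@_a)) = red_iota (s b a)].
Proof.
move=> hmax red_sb0; have [fa0 nufa ->] := close_lead_unit (HRO _) red_sb0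
  (pi_coef_lead (top_term_min hmax)).
by rewrite mcoeff_msupp fa0 (nu_wtE nufa).
Qed.

Lemma top_term_nonunit b a : top_term s b a -> red_iota (s b a) = 0 ->
  a \in msupp f -> nu_wt f a < wt b a.
Proof.
move=> hmax red_sb /[!mcoeff_msupp] fa0.
have [fa0'|] := close_lead_nonunit (HRO _) red_sb (pi_coef_lead (top_term_min hmax)).
  by rewrite fa0' eqxx in fa0.
rewrite -(ler_int F) -[(b.+1)%:~R]/(b.+1%:R : F) -natr1 /nu_wt /wt mulN1r; lra.
Qed.

Section InitFormImage.
Variable g : {mpoly R[n.+1]}.
Hypothesis hg : is_init_form (-1) w s g.

Lemma subst_init_form_eq b0 a0 : top_term s b0 a0 -> red_iota (s b0 a0) != 0 ->
  subst g = init_nu nu red p w f.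
Proof.
move=> hmax0 red0; have [fa00 wt0 _] := top_term_unit hmax0 red0.
apply/mpolyP => a; rewrite mcoeff_init_nu.
have [[b hmax]|ntop] := classic (exists b, top_term s b a).
  rewrite (mcoeff_subst_top hg hmax).
  have [red_sb|red_sb] := eqVneq (red_iota (s b a)) 0.
    rewrite red_sb; case: ifP => // /andP [fa /allP /(_ _ fa00) le_a0].
    have := lt_le_trans (top_term_nonunit hmax red_sb fa) (hmax0.2 _ _ hmax.1).
    by rewrite -wt0 ltNge le_a0.
  have [fa wt_a ->] := top_term_unit hmax red_sb; rewrite fa /=.
  suff -> : nu_top f a by [].
  apply/allP => a' fa'; rewrite wt_a.
  exact: le_trans (nu_wt_le_top fa' hmax0) (hmax.2 _ _ hmax0.1).
have -> : (subst g)@_a = 0.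
  by have [//|/(mcoeff_subst_neq0 hg)/ntop] := eqVneq (subst g)@_a 0.
case: ifP => // /andP [/[dup] fa /[!mcoeff_msupp] /pi_low_term [b [sb0 le_b]] /allP hmax_a].
case: ntop; exists b; split => // b' a' sb'0.
apply: le_trans (hmax0.2 _ _ sb'0) _; rewrite -wt0.
exact: le_trans (hmax_a _ fa00) le_b.
Qed.

Lemma subst_init_form : subst g = 0 \/ subst g = init_nu nu red p w f.
Proof.
have [|ne0] := eqVneq (subst g) 0; [by left|right].
have [a] : exists a, a \in msupp (subst g).
  case: (msupp (subst g)) (msupp_eq0 (subst g)) => [|a ? _].
    by rewrite eqxx (negbTE ne0).
  by exists a; rewrite mem_head.
rewrite mcoeff_msupp => /[dup] /(mcoeff_subst_neq0 hg) [b hmax].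
by rewrite (mcoeff_subst_top hg hmax); apply: subst_init_form_eq.
Qed.

End InitFormImage.

End PiPreimage.

Section Expansion.
Variable f : {mpoly K[n]}.
Hypothesis fO : coeffs_in_O nu f.

Definition pexpansion : pstx R n := fun b a => pdigit f@_a b.

Definition coef_val a := `|nu f@_a|%N.

Lemma pexpansion_supp b a : pexpansion b a != 0 -> a \in msupp f.
Proof.
by rewrite mcoeff_msupp; apply: contraNneq => fa0; rewrite /pexpansion fa0 pdigit0.
Qed.

Lemma pexpansion_pi : is_pi nu iota p pexpansion f.
Proof.
split=> [|a]; first by exists (msupp f) => b a /pexpansion_supp.
exact: pdigit_converge.
Qed.

Lemma coef_valE a : a \in msupp f -> nu f@_a = coef_val a.
Proof. by rewrite mcoeff_msupp; apply: nu_absz. Qed.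

Lemma pexpansion_lead a : a \in msupp f ->
  pexpansion (coef_val a) a != 0 /\
  red_iota (pexpansion (coef_val a) a) = red (f@_a * p ^ (- nu f@_a)).
Proof. by move=> fa; apply: pdigit_lead (coef_valE fa); rewrite -mcoeff_msupp. Qed.

Lemma pexpansion_ge b a : pexpansion b a != 0 -> (coef_val a <= b)%N.
Proof.
move=> /[dup] /pexpansion_supp fa; apply: contraNleq => lt_b.
by apply/eqP/(pdigit_lt _ (coef_valE fa)); rewrite -?mcoeff_msupp.
Qed.

Lemma top_term_pexpansion b a :
  top_term pexpansion b a <-> [/\ a \in msupp f, nu_top f a & b = coef_val a].
Proof.
have wt_lead a' : a' \in msupp f -> nu_wt f a' = wt (coef_val a') a'.
  by move=> fa'; apply/nu_wtE/coef_valE.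
split=> [[sb0 hmax]|[fa hmax ->]].
  have fa := pexpansion_supp sb0.
  have eq_b : b = coef_val a.
    apply/eqP; rewrite eqn_leq pexpansion_ge // andbT -(wt_le _ _ a).
    exact/hmax/(pexpansion_lead fa).1.
  split=> //; apply/allP => a' fa'.
  by rewrite !wt_lead // -eq_b; apply/hmax/(pexpansion_lead fa').1.
split=> [|b' a' sb'0]; first exact: (pexpansion_lead fa).1.
have fa' := pexpansion_supp sb'0.
rewrite -wt_lead //; apply: le_trans (allP hmax _ fa').
by rewrite wt_lead // wt_le pexpansion_ge.
Qed.

Definition init_pexpansion : {mpoly R[n.+1]} :=
  \sum_(a <- msupp f | nu_top f a) pexpansion (coef_val a) a *: 'X_[mcons (coef_val a) a].

Lemma init_pexpansion_is_init_form : is_init_form (-1) w pexpansion init_pexpansion.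
Proof.
move=> m /=; rewrite raddf_sum (big_only1_seq (x0 := mtail m) (msupp_uniq f)) /=; last first.
  move=> a _ _ am; rewrite mcoeffZ mcoeffX mcons_eq [mtail m == a]eq_sym.
  by rewrite (negbTE am) andbF mulr0.
rewrite mcoeffZ mcoeffX mcons_eq eqxx andbT.
split=> [/top_term_pexpansion [-> -> <-]|ntop].
  by rewrite /= eqxx mulr1.
case: ifP => // /andP [fa hmax].
have [eq_b|] := eqVneq (m ord0) (coef_val (mtail m)); last by rewrite mulr0.
case: ntop; apply/(top_term_pexpansion (m ord0) (mtail m)).
by split.
Qed.

Lemma subst_init_pexpansion : subst init_pexpansion = init_nu nu red p w f.
Proof.
have -> : init_nu nu red p w f =
    \sum_(a <- msupp f | nu_top f a) red (f@_a * p ^ (- nu f@_a)) *: 'X_[a] by [].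
rewrite rmorph_sum big_seq_cond [RHS]big_seq_cond; apply: eq_bigr => a /andP [fa _].
by rewrite subst_t1ZX mtail_mcons (pexpansion_lead fa).2.
Qed.

End Expansion.

Lemma red_t1_image_sub_init_nu_ideal (I : {mpoly K[n]} -> Prop) :
  is_OK_ideal nu I -> forall q,
  red_t1_image red iota (init_ideal (-1) w (pi_preimage nu iota p I)) q ->
  init_nu_ideal nu red p w I q.
Proof.
move=> HI q [g [Jg <-]]; have [IO _ _ _] := HI; rewrite red_t1E.
apply: gen_ideal_rmorph Jg => g0 [s [[_ [f [If s_pi]]] hg]].
by case: (subst_init_form s_pi (IO f If) hg) => ->; [left|right; exists f].
Qed.

Lemma init_nu_ideal_sub_red_t1_image (I : {mpoly K[n]} -> Prop) :
  is_OK_ideal nu I -> forall q,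
  init_nu_ideal nu red p w I q ->
  red_t1_image red iota (init_ideal (-1) w (pi_preimage nu iota p I)) q.
Proof.
move=> HI q Iq; have [IO _ _ _] := HI.
have [g [Jg <-]] :
    exists g, init_ideal (-1) w (pi_preimage nu iota p I) g /\ subst g = q.
  move: q Iq; apply: gen_ideal_min => [|q0 [f [If ->]]].
    exact: is_ideal_image (subst_t1_surj red_iota_surj) (gen_ideal_is_ideal _).
  have fO := IO f If; exists (init_pexpansion f); split; last exact: subst_init_pexpansion.
  apply: gen_ideal_gen; exists (pexpansion f); split; last exact: init_pexpansion_is_init_form.
  have s_pi := pexpansion_pi fO; split; [exact: s_pi.1 | by exists f].
by exists g; rewrite red_t1E.
Qed.

End InitialForms.
End Digits.
End Residue.
End Uniformizer.
End Valuation.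

Unset Implicit Arguments.
Set Strict Implicit.

Theorem proposition2p8
  (F : realType)                                   (* the real numbers *)
  (K : fieldType) (nu : K -> int) (p : K)
  (Hnu : is_discrete_valuation nu) (Hp0 : p != 0) (Hp : nu p = 1)
  (Hcomplete : complete_val nu)
  (kk : fieldType) (red : K -> kk) (Hred : is_residue_map nu red)
  (R : comNzRingType) (iota : {rmorphism R -> K})
  (Hinj : injective iota) (HRO : forall r, inO nu (iota r))
  (Hdense : dense_in_O nu iota) (HpR : exists p0 : R, iota p0 = p)
  (Hnoeth : noetherian R)
  (n : nat) (I : {mpoly K[n]} -> Prop) (HI : is_OK_ideal nu I)
  (w : 'I_n -> F) :
  forall q : {mpoly kk[n]},
    red_t1_image red iota (init_ideal (-1) w (pi_preimage nu iota p I)) q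
    <-> init_nu_ideal nu red p w I q.
Proof.
move=> q; split.
- exact: (red_t1_image_sub_init_nu_ideal Hnu Hp0 Hp Hred HRO HI).
- exact: (init_nu_ideal_sub_red_t1_image Hnu Hp0 Hp Hred HRO Hdense HI).
Qed.
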